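(* Let $b\in\mathbb{C}\setminus\{1\}$, and let $a_n(q)$ be the sequence of polynomials in $q$ defined recursively by \[ a_0(q)=0,\qquad a_n(q) = b^n + \left(1-q^{n-1}\right)a_{n-1}(q) \quad \text{for } n\in\mathbb{N}. \] Then, for $q\in\mathbb{C}$ with $|q|<\min(|b|^{-1},1)$, the limit below exists and \[ \lim_{n\rightarrow\infty}\left( \sum_{1\le\ell\le n} b^\ell - a_n(q)\right) =\lim_{n\rightarrow\infty}\left( \frac{b-b^{n+1}}{1-b} - a_n(q) \right) = \frac{b}{1-b} - \frac{b\,(q;q)_\infty}{(b;q)_\infty}. \]
   Context: For $n\in\mathbb{N}_0\cup\{\infty\}$, $(a;q)_n := \prod_{j=0}^{n-1}(1-aq^j)$. If $b=0$, interpret $|b|^{-1}=\infty$. *)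

From Stdlib Require Import Reals.
From Coquelicot Require Export Coquelicot.
Open Scope C_scope.

Fixpoint a_seq (b q : C) (n : nat) : C :=
  match n with
  | O => 0
  | S m => b ^ (S m) + (1 - q ^ m) * a_seq b q m
  end.

Fixpoint qpoch (a q : C) (n : nat) : C :=
  match n with
  | O => 1
  | S m => qpoch a q m * (1 - a * q ^ m)
  end.

Fixpoint geom_sum (b : C) (n : nat) : C :=
  match n with
  | O => 0
  | S m => geom_sum b m + b ^ (S m)
  end.

Definition cv_C (u : nat -> C) (l : C) : Prop :=
  filterlim u eventually (locally l).

(* Put G_n = a_n + b^(n+1)/(1-b).  The recursion becomes
   G_(n+1) = (1 - q^n) G_n + (qb)^n b/(1-b), which unrolls to
   (1-b) G_(n+1) = b (q;q)_n sum_(m<=n) (qb)^m/(q;q)_m.  As |qb| < 1, Euler's identity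
   sum_m z^m/(q;q)_m = 1/(z;q)_oo applies to z = qb, and (b;q)_oo = (1-b) (qb;q)_oo.
   Euler's identity comes from the functional equation E(qz) = (1-z) E(z) of the series:
   iterating it gives (z;q)_N E(z) = E(q^N z), which tends to E(0) = 1.  In particular
   (qb;q)_oo <> 0, so the quotient in the statement is not a junk value. *)

From Stdlib Require Import Reals Lra Lia.
From Coquelicot Require Import Coquelicot.
Open Scope C_scope.

Lemma cv_C_unique (u : nat -> C) (l l' : C) : cv_C u l -> cv_C u l' -> l = l'.
Proof. exact (filterlim_locally_unique (V := C_NormedModule) u l l'). Qed.

Lemma cv_C_ext (u v : nat -> C) (l : C) : (forall n, u n = v n) -> cv_C u l -> cv_C v l.
Proof. intros E. apply filterlim_ext. exact E. Qed.

Lemma cv_C_const (c : C) : cv_C (fun _ => c) c.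
Proof. exact (filterlim_const c). Qed.

Lemma cv_C_plus (u v : nat -> C) (l m : C) :
  cv_C u l -> cv_C v m -> cv_C (fun n => u n + v n) (l + m).
Proof.
  intros Hu Hv. exact (filterlim_comp_2 _ _ _ Hu Hv (filterlim_plus (V := C_NormedModule) l m)).
Qed.

Lemma cv_C_mult (u v : nat -> C) (l m : C) :
  cv_C u l -> cv_C v m -> cv_C (fun n => u n * v n) (l * m).
Proof.
  intros Hu Hv.
  (* the scalar factor lives in [C_AbsRing], whose (equivalent) uniform structure is not [C]'s *)
  assert (Hu' : filterlim u eventually (@locally (AbsRing_UniformSpace C_AbsRing) l)).
  { intros P HP. apply Hu. now apply locally_C. }
  exact (filterlim_comp_2 _ _ _ Hu' Hv (filterlim_scal (K := C_AbsRing) (V := C_NormedModule) l m)).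
Qed.

Lemma cv_C_minus (u v : nat -> C) (l m : C) :
  cv_C u l -> cv_C v m -> cv_C (fun n => u n - v n) (l - m).
Proof.
  intros Hu Hv. apply (cv_C_ext (fun n => u n + (-1) * v n)); [intros n; ring|].
  replace (l - m) with (l + (-1) * m) by ring.
  exact (cv_C_plus _ _ _ _ Hu (cv_C_mult _ _ _ _ (cv_C_const _) Hv)).
Qed.

Lemma cv_C_succ (u : nat -> C) (l : C) : cv_C (fun n => u (S n)) l <-> cv_C u l.
Proof.
  split; intros H P HP; destruct (H P HP) as [N HN].
  - exists (S N). intros [|n] Hn; [lia|]. apply HN. lia.
  - exists N. intros n Hn. apply HN. lia.
Qed.

Lemma cv_C_Cmod (u : nat -> C) (l : C) :
  cv_C u l <-> is_lim_seq (fun n => Cmod (u n - l)) 0%R.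
Proof.
  split; intros H.
  - assert (Hd := cv_C_minus _ _ _ _ H (cv_C_const l)).
    replace (l - l) with (RtoC 0) in Hd by ring.
    assert (Hn := filterlim_norm (K := C_AbsRing) (V := C_NormedModule) (RtoC 0)).
    change (@norm _ C_NormedModule (RtoC 0)) with (Cmod 0) in Hn. rewrite Cmod_0 in Hn.
    unfold cv_C in Hd. exact (filterlim_comp _ _ _ _ _ _ _ _ Hd Hn).
  - apply (filterlim_norm_zero (V := C_NormedModule)) in H.
    change (cv_C (fun n => u n - l) 0) in H.
    apply (cv_C_ext (fun n => (u n - l) + l)); [intros n; ring|].
    assert (Hl := cv_C_plus _ _ _ _ H (cv_C_const l)).
    replace (0 + l) with l in Hl by ring. exact Hl.
Qed.

Lemma cv_C_dominated (u : nat -> C) (l : C) (e : nat -> R) :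
  (forall n, (Cmod (u n - l) <= e n)%R) -> is_lim_seq e 0%R -> cv_C u l.
Proof.
  intros He Hlim. apply cv_C_Cmod.
  apply (is_lim_seq_le_le (fun _ => 0%R) _ e); [|apply is_lim_seq_const|exact Hlim].
  intros n. split; [apply Cmod_ge_0|apply He].
Qed.

Lemma cv_C_Cmod_le (u : nat -> C) (l c : C) (B : R) :
  cv_C u l -> (forall n, (Cmod (u n - c) <= B)%R) -> (Cmod (l - c) <= B)%R.
Proof.
  intros Hu HB. apply cv_C_Cmod in Hu.
  assert (Hle : forall n, (Cmod (l - c) <= B + Cmod (u n - l))%R).
  { intros n. replace (l - c) with ((u n - c) - (u n - l)) by ring.
    eapply Rle_trans; [apply Cmod_triangle|]. rewrite Cmod_opp. specialize (HB n). lra. }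
  assert (Hs := is_lim_seq_plus' _ _ _ _ (is_lim_seq_const B) Hu).
  rewrite Rplus_0_r in Hs.
  exact (is_lim_seq_le _ _ _ _ Hle (is_lim_seq_const _) Hs).
Qed.

Lemma ex_series_C_geom_dominated (a : nat -> C) (K rho : R) :
  (0 <= rho < 1)%R -> (forall n, (Cmod (a n) <= K * rho ^ n)%R) -> ex_series a.
Proof.
  intros Hrho Ha. apply (ex_series_le (V := C_CompleteNormedModule) a (fun n => K * rho ^ n)%R Ha).
  apply (ex_series_scal_l K (fun n => rho ^ n)%R), ex_series_geom. rewrite Rabs_pos_eq; lra.
Qed.

Lemma cv_C_partial_sums (u w : nat -> C) (s : C) :
  (forall n, u (S n) = u n + w n) -> is_series w s -> cv_C u (u 0%nat + s).
Proof.
  intros Hu Hs.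
  assert (Hsum : forall n, u (S n) = u 0%nat + sum_n w n).
  { induction n as [|n IH].
    - rewrite sum_O. apply Hu.
    - rewrite sum_Sn, Hu, IH. unfold plus; simpl. ring. }
  apply cv_C_succ, (cv_C_ext (fun n => u 0%nat + sum_n w n)); [intros n; now rewrite Hsum|].
  exact (cv_C_plus _ _ _ _ (cv_C_const _) Hs).
Qed.

Lemma exp_neg_le_one_sub (s : R) : (0 <= s < 1)%R -> (exp (- (s / (1 - s))) <= 1 - s)%R.
Proof.
  intros Hs. rewrite exp_Ropp.
  (* [exp t >= 1 + t] at [t = s / (1 - s)], where [1 + t = / (1 - s)] *)
  assert (H := exp_ineq1_le (s / (1 - s))).
  replace (1 + s / (1 - s))%R with (/ (1 - s))%R in H by (field; lra).
  apply Rinv_le_contravar in H; [|apply Rinv_0_lt_compat; lra].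
  rewrite Rinv_inv in H. exact H.
Qed.

Lemma exp_le_compat (x y : R) : (x <= y)%R -> (exp x <= exp y)%R.
Proof. intros [H|H]; [left; now apply exp_increasing|right; now subst]. Qed.

Lemma pow_le_one (r : R) (n : nat) : (0 <= r <= 1)%R -> (r ^ n <= 1)%R.
Proof. intros Hr. rewrite <- (pow1 n). apply pow_incr. lra. Qed.

Lemma geom_partial_le (c r : R) (n : nat) :
  (0 <= c)%R -> (0 <= r < 1)%R -> (c * (1 - r ^ n) / (1 - r) <= c / (1 - r))%R.
Proof.
  intros Hc Hr. assert (0 <= r ^ n)%R by (apply pow_le; lra).
  apply Rmult_le_compat_r; [apply Rlt_le, Rinv_0_lt_compat; lra|nra].
Qed.

Lemma Cmod_one_sub_le (y : C) : (Cmod (1 - y) <= 1 + Cmod y)%R.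
Proof. eapply Rle_trans; [apply Cmod_triangle|]. rewrite Cmod_opp, Cmod_1. lra. Qed.

Lemma Cmod_one_sub_ge (y : C) : (1 - Cmod y <= Cmod (1 - y))%R.
Proof.
  assert (H := Cmod_triangle (1 - y) y). replace (1 - y + y) with (RtoC 1) in H by ring.
  rewrite Cmod_1 in H. lra.
Qed.

Lemma qpoch_S (x q : C) (n : nat) : qpoch x q (S n) = qpoch x q n * (1 - x * q ^ n).
Proof. reflexivity. Qed.

Lemma qpoch_Cmod_le (x q : C) (n : nat) :
  (Cmod q < 1)%R -> (Cmod (qpoch x q n) <= exp (Cmod x / (1 - Cmod q)))%R.
Proof.
  intros Hq. set (r := Cmod q). assert (Hr : (0 <= r < 1)%R) by (split; [apply Cmod_ge_0|exact Hq]).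
  assert (Hx := Cmod_ge_0 x).
  assert (Hinv : forall k, (Cmod (qpoch x q k) <= exp (Cmod x * (1 - r ^ k) / (1 - r)))%R).
  { intros k. induction k as [|k IH].
    - simpl. rewrite Cmod_1, Rminus_diag, Rmult_0_r, Rdiv_0_l, exp_0. lra.
    - rewrite qpoch_S, Cmod_mult.
      eapply Rle_trans; [apply Rmult_le_compat; [apply Cmod_ge_0|apply Cmod_ge_0|exact IH|apply Cmod_one_sub_le]|].
      rewrite Cmod_mult, Cmod_pow.
      eapply Rle_trans; [apply Rmult_le_compat_l; [apply Rlt_le, exp_pos|apply exp_ineq1_le]|].
      rewrite <- exp_plus. right. f_equal. unfold r. simpl. field. lra. }
  eapply Rle_trans; [apply Hinv|]. apply exp_le_compat. now apply geom_partial_le.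
Qed.

Lemma qpoch_Cmod_ge (x q : C) (n : nat) : (Cmod q < 1)%R -> (Cmod x < 1)%R ->
  (exp (- (Cmod x / ((1 - Cmod x) * (1 - Cmod q)))) <= Cmod (qpoch x q n))%R.
Proof.
  intros Hq Hx1. set (r := Cmod q). assert (Hr : (0 <= r < 1)%R) by (split; [apply Cmod_ge_0|exact Hq]).
  set (t := Cmod x). assert (Ht : (0 <= t < 1)%R) by (split; [apply Cmod_ge_0|exact Hx1]).
  assert (Hinv : forall k, (exp (- (t / (1 - t) * (1 - r ^ k) / (1 - r))) <= Cmod (qpoch x q k))%R).
  { intros k. induction k as [|k IH].
    - simpl. rewrite Cmod_1, Rminus_diag, Rmult_0_r, Rdiv_0_l, Ropp_0, exp_0. lra.
    - assert (Hs : (0 <= t * r ^ k <= t)%R).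
      { assert (0 <= r ^ k <= 1)%R by (split; [apply pow_le|apply pow_le_one]; lra). nra. }
      assert (Hfac : (exp (- (t * r ^ k / (1 - t))) <= Cmod (1 - x * q ^ k))%R).
      { eapply Rle_trans; [|apply Cmod_one_sub_ge]. rewrite Cmod_mult, Cmod_pow. fold r t.
        eapply Rle_trans; [|apply exp_neg_le_one_sub; lra].
        apply exp_le_compat, Ropp_le_contravar. unfold Rdiv.
        apply Rmult_le_compat_l; [lra|]. apply Rinv_le_contravar; lra. }
      rewrite qpoch_S, Cmod_mult.
      eapply Rle_trans; [|apply Rmult_le_compat; [apply Rlt_le, exp_pos|apply Rlt_le, exp_pos|exact IH|exact Hfac]].
      rewrite <- exp_plus. right. f_equal. unfold r, t in *. simpl. field. lra. }
  eapply Rle_trans; [|apply Hinv]. apply exp_le_compat, Ropp_le_contravar.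
  replace (t / ((1 - t) * (1 - r)))%R with (t / (1 - t) / (1 - r))%R by (field; lra).
  apply geom_partial_le; [apply Rdiv_le_0_compat; lra|exact Hr].
Qed.

Lemma qpoch_cv (x q : C) : (Cmod q < 1)%R -> exists l, cv_C (qpoch x q) l.
Proof.
  intros Hq. assert (Hr : (0 <= Cmod q < 1)%R) by (split; [apply Cmod_ge_0|exact Hq]).
  set (w n := - (qpoch x q n * (x * q ^ n))).
  assert (Hw : forall n, (Cmod (w n) <= exp (Cmod x / (1 - Cmod q)) * Cmod x * Cmod q ^ n)%R).
  { intros n. unfold w. rewrite Cmod_opp, !Cmod_mult, Cmod_pow, Rmult_assoc.
    apply Rmult_le_compat_r; [apply Rmult_le_pos; [apply Cmod_ge_0|apply pow_le; lra]|].
    now apply qpoch_Cmod_le. }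
  destruct (ex_series_C_geom_dominated w _ _ Hr Hw) as [s Hs].
  exists (qpoch x q 0 + s). apply (cv_C_partial_sums _ w); [|exact Hs].
  intros n. unfold w. rewrite qpoch_S. ring.
Qed.

Lemma qpoch_succ (x q : C) (n : nat) : qpoch x q (S n) = (1 - x) * qpoch (x * q) q n.
Proof.
  induction n as [|n IH].
  - simpl. ring.
  - rewrite qpoch_S, IH, qpoch_S. simpl. ring.
Qed.

Lemma qpoch_cv_succ (x q l : C) : cv_C (qpoch (x * q) q) l -> cv_C (qpoch x q) ((1 - x) * l).
Proof.
  intros H. apply cv_C_succ, (cv_C_ext (fun n => (1 - x) * qpoch (x * q) q n)).
  - intros n. now rewrite qpoch_succ.
  - exact (cv_C_mult _ _ _ _ (cv_C_const _) H).
Qed.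

Lemma qpoch_neq0 (x q : C) (n : nat) : (Cmod q < 1)%R -> (Cmod x < 1)%R -> qpoch x q n <> 0.
Proof.
  intros Hq Hx E. assert (H := qpoch_Cmod_ge x q n Hq Hx).
  rewrite E, Cmod_0 in H. assert (H0 := exp_pos (- (Cmod x / ((1 - Cmod x) * (1 - Cmod q))))). lra.
Qed.

Definition euler_term (q z : C) (m : nat) : C := z ^ m / qpoch q q m.

Definition qpoch_q_inv_bound (q : C) : R := exp (Cmod q / ((1 - Cmod q) * (1 - Cmod q))).

Lemma euler_term_Cmod_le (q z : C) (m : nat) : (Cmod q < 1)%R ->
  (Cmod (euler_term q z m) <= qpoch_q_inv_bound q * Cmod z ^ m)%R.
Proof.
  intros Hq. unfold euler_term, qpoch_q_inv_bound.
  rewrite Cmod_div by now apply qpoch_neq0. rewrite Cmod_pow, Rmult_comm. unfold Rdiv.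
  apply Rmult_le_compat_l; [apply pow_le, Cmod_ge_0|].
  rewrite <- (Rinv_inv (exp _)), <- exp_Ropp.
  apply Rinv_le_contravar; [apply exp_pos|]. now apply qpoch_Cmod_ge.
Qed.

Lemma euler_term_succ_shift (q z : C) (m : nat) : (Cmod q < 1)%R ->
  euler_term q (z * q) (S m) = euler_term q z (S m) - z * euler_term q z m.
Proof.
  intros Hq. unfold euler_term.
  assert (H1 := qpoch_neq0 q q m Hq Hq). assert (H2 := qpoch_neq0 q q (S m) Hq Hq).
  rewrite qpoch_S in *. rewrite Cpow_mult_l.
  assert (1 - q * q ^ m <> 0) by (intros E; apply H2; rewrite E; ring).
  simpl. field. auto.
Qed.

Lemma is_lim_seq_scal_geom (c r : R) : (0 <= r < 1)%R -> is_lim_seq (fun n => (c * r ^ n)%R) 0%R.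
Proof.
  intros Hr. assert (H := is_lim_seq_scal_l _ c _ (is_lim_seq_geom r ltac:(rewrite Rabs_pos_eq; lra))).
  rewrite Rbar_mult_0_r in H. exact H.
Qed.

Lemma euler_series_ex (q z : C) : (Cmod q < 1)%R -> (Cmod z < 1)%R -> ex_series (euler_term q z).
Proof.
  intros Hq Hz. apply (ex_series_C_geom_dominated _ (qpoch_q_inv_bound q) (Cmod z)).
  - split; [apply Cmod_ge_0|exact Hz].
  - intros m. now apply euler_term_Cmod_le.
Qed.

Lemma euler_series_shift (q z E : C) : (Cmod q < 1)%R ->
  is_series (euler_term q z) E -> is_series (euler_term q (z * q)) ((1 - z) * E).
Proof.
  intros Hq HE.
  assert (Hsum : forall n, sum_n (euler_term q (z * q)) (S n)
                           = sum_n (euler_term q z) (S n) - z * sum_n (euler_term q z) n).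
  { induction n as [|n IH].
    - rewrite !sum_Sn, !sum_O, euler_term_succ_shift by exact Hq.
      change (euler_term q (z * q) 0) with (euler_term q z 0). unfold plus; simpl. ring.
    - rewrite (sum_Sn _ (S n)), IH, euler_term_succ_shift by exact Hq.
      rewrite !(sum_Sn (euler_term q z)). unfold plus; simpl. ring. }
  change (cv_C (sum_n (euler_term q (z * q))) ((1 - z) * E)).
  change (cv_C (sum_n (euler_term q z)) E) in HE.
  apply cv_C_succ, (cv_C_ext _ _ _ (fun n => eq_sym (Hsum n))).
  replace ((1 - z) * E) with (E - z * E) by ring.
  apply cv_C_minus; [now apply cv_C_succ|exact (cv_C_mult _ _ _ _ (cv_C_const _) HE)].
Qed.

Lemma euler_series_iter (q z E : C) (N : nat) : (Cmod q < 1)%R ->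
  is_series (euler_term q z) E -> is_series (euler_term q (z * q ^ N)) (qpoch z q N * E).
Proof.
  intros Hq HE. induction N as [|N IH].
  - simpl. rewrite Cmult_1_r, Cmult_1_l. exact HE.
  - replace (z * q ^ S N) with (z * q ^ N * q) by (simpl; ring).
    replace (qpoch z q (S N) * E) with ((1 - z * q ^ N) * (qpoch z q N * E)) by (rewrite qpoch_S; ring).
    now apply euler_series_shift.
Qed.

Lemma euler_series_Cmod_sub1_le (q w E : C) : (Cmod q < 1)%R -> (Cmod w < 1)%R ->
  is_series (euler_term q w) E -> (Cmod (E - 1) <= qpoch_q_inv_bound q * Cmod w / (1 - Cmod w))%R.
Proof.
  intros Hq Hw HE. set (K := qpoch_q_inv_bound q).
  assert (HK : (0 < K)%R) by apply exp_pos.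
  assert (Hw0 := Cmod_ge_0 w).
  assert (Hpart : forall n, (Cmod (sum_n (euler_term q w) n - 1)
                             <= K * Cmod w * (1 - Cmod w ^ n) / (1 - Cmod w))%R).
  { intros n. induction n as [|n IH].
    - rewrite sum_O. unfold euler_term. simpl.
      replace (1 / 1 - 1) with (RtoC 0) by field. rewrite Cmod_0. lra.
    - rewrite sum_Sn. unfold plus; simpl.
      replace (sum_n (euler_term q w) n + euler_term q w (S n) - 1)
        with ((sum_n (euler_term q w) n - 1) + euler_term q w (S n)) by ring.
      eapply Rle_trans; [apply Cmod_triangle|].
      eapply Rle_trans; [apply Rplus_le_compat; [exact IH|now apply euler_term_Cmod_le]|].
      fold K. right. simpl. field. lra. }
  apply (cv_C_Cmod_le (sum_n (euler_term q w))); [exact HE|].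
  intros n. eapply Rle_trans; [apply Hpart|].
  apply geom_partial_le; [apply Rmult_le_pos; lra|lra].
Qed.

Theorem euler_identity (q z E zq : C) : (Cmod q < 1)%R -> (Cmod z < 1)%R ->
  is_series (euler_term q z) E -> cv_C (qpoch z q) zq -> zq * E = 1.
Proof.
  intros Hq Hz HE Hzq.
  set (K := qpoch_q_inv_bound q).
  assert (HK : (0 < K)%R) by apply exp_pos.
  assert (Hr : (0 <= Cmod q < 1)%R) by (split; [apply Cmod_ge_0|exact Hq]).
  assert (Hz0 := Cmod_ge_0 z).
  apply (cv_C_unique (fun N => qpoch z q N * E)).
  - exact (cv_C_mult _ _ _ _ Hzq (cv_C_const E)).
  - apply (cv_C_dominated _ _ (fun N => K * Cmod z / (1 - Cmod z) * Cmod q ^ N)%R);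
      [|now apply is_lim_seq_scal_geom].
    intros N.
    assert (Hs : (Cmod (z * q ^ N) <= Cmod z * Cmod q ^ N <= Cmod z)%R).
    { rewrite Cmod_mult, Cmod_pow. assert (H := pow_le_one (Cmod q) N ltac:(lra)).
      assert (0 <= Cmod q ^ N)%R by (apply pow_le; lra). nra. }
    eapply Rle_trans.
    { apply (euler_series_Cmod_sub1_le q (z * q ^ N)); [exact Hq|lra|now apply euler_series_iter]. }
    fold K. apply Rle_trans with (K * (Cmod z * Cmod q ^ N) / (1 - Cmod z))%R.
    + assert (Ha := Cmod_ge_0 (z * q ^ N)). unfold Rdiv.
      apply Rmult_le_compat; [nra|apply Rlt_le, Rinv_0_lt_compat; lra|nra|].
      apply Rinv_le_contravar; lra.
    + right. field. lra.
Qed.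

Lemma geom_sum_closed (b : C) (n : nat) : (1 - b) * geom_sum b n = b - b ^ S n.
Proof.
  induction n as [|n IH]; [simpl; ring|].
  change (geom_sum b (S n)) with (geom_sum b n + b ^ S n).
  rewrite Cmult_plus_distr_l, IH. simpl. ring.
Qed.

Lemma a_seq_euler (b q : C) (n : nat) : (Cmod q < 1)%R ->
  (1 - b) * a_seq b q (S n) + b ^ S (S n) = b * qpoch q q n * sum_n (euler_term q (b * q)) n.
Proof.
  intros Hq. induction n as [|n IH].
  - rewrite sum_O. unfold euler_term. simpl. field.
  - assert (Hstep : (1 - b) * a_seq b q (S (S n)) + b ^ S (S (S n))
                    = (1 - q * q ^ n) * ((1 - b) * a_seq b q (S n) + b ^ S (S n))
                      + q ^ S n * b ^ S (S n)) by (simpl; ring).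
    rewrite Hstep, IH, sum_Sn, qpoch_S. unfold plus, euler_term; simpl.
    assert (H := qpoch_neq0 q q (S n) Hq Hq). rewrite qpoch_S in H.
    assert (H1 : 1 - q * q ^ n <> 0) by (intros E; apply H; rewrite E; ring).
    assert (H2 : qpoch q q n <> 0) by (intros E; apply H; rewrite E; ring).
    rewrite Cpow_mult_l. field. split; assumption.
Qed.

Lemma geom_sum_sub_a_seq (b q : C) (n : nat) : 1 - b <> 0 -> (Cmod q < 1)%R ->
  geom_sum b (S n) - a_seq b q (S n)
  = b / (1 - b) - b / (1 - b) * (qpoch q q n * sum_n (euler_term q (b * q)) n).
Proof.
  intros Hb1 Hq. assert (G := geom_sum_closed b (S n)).
  replace (geom_sum b (S n)) with ((b - b ^ S (S n)) / (1 - b)) by (rewrite <- G; field; exact Hb1).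
  replace (b / (1 - b) * (qpoch q q n * sum_n (euler_term q (b * q)) n))
    with (b * qpoch q q n * sum_n (euler_term q (b * q)) n / (1 - b)) by (field; exact Hb1).
  rewrite <- a_seq_euler by exact Hq. field. exact Hb1.
Qed.

Theorem theorem1p2 (b q : C) :
  b <> 1 ->
  (Cmod q < 1)%R -> (Cmod q * Cmod b < 1)%R ->
  exists qq bq : C,
    (* qq = (q;q)_oo and bq = (b;q)_oo as limits of finite products *)
    cv_C (fun n => qpoch q q n) qq /\
    cv_C (fun n => qpoch b q n) bq /\
    cv_C (fun n => geom_sum b n - a_seq b q n) (b / (1 - b) - b * qq / bq) /\
    cv_C (fun n => (b - b ^ (S n)) / (1 - b) - a_seq b q n)
         (b / (1 - b) - b * qq / bq).
Proof.
  intros Hb Hq Hqb.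
  assert (Hb1 : 1 - b <> 0) by (intros E; apply Hb; replace b with (1 - (1 - b)) by ring; rewrite E; ring).
  assert (Hz : (Cmod (b * q) < 1)%R) by (rewrite Cmod_mult; lra).
  destruct (qpoch_cv q q Hq) as [qq Hqq].
  destruct (qpoch_cv (b * q) q Hq) as [zq Hzq].
  destruct (euler_series_ex q (b * q) Hq Hz) as [E HE].
  assert (Heuler := euler_identity q (b * q) E zq Hq Hz HE Hzq).
  assert (Hzq0 : zq <> 0) by (intros E0; rewrite E0, Cmult_0_l in Heuler; now apply C1_nz).
  assert (Hpsi : cv_C (fun n => geom_sum b n - a_seq b q n) (b / (1 - b) - b / (1 - b) * (qq * E))).
  { apply cv_C_succ, (cv_C_ext _ _ _ (fun n => eq_sym (geom_sum_sub_a_seq b q n Hb1 Hq))).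
    exact (cv_C_minus _ _ _ _ (cv_C_const _) (cv_C_mult _ _ _ _ (cv_C_const _) (cv_C_mult _ _ _ _ Hqq HE))). }
  replace (b / (1 - b) * (qq * E)) with (b * qq / ((1 - b) * zq)) in Hpsi
    by (replace E with (/ zq) by (rewrite <- (Cmult_1_l (/ zq)), <- Heuler; field; exact Hzq0);
        field; split; assumption).
  exists qq, ((1 - b) * zq). repeat split; [exact Hqq|now apply qpoch_cv_succ|exact Hpsi|].
  apply (cv_C_ext (fun n => geom_sum b n - a_seq b q n)); [|exact Hpsi].
  intros n. rewrite <- geom_sum_closed. field. exact Hb1.
Qed.
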